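(* Let $\mathcal L\subseteq\mathfrak P(S)$ be an algebraic lattice of sets, endowed with its Zariski topology, and let $\mathcal L_\mathrm{fin}$ be the set of its finitely generated elements. Then: (1) $\mathcal L$ with the Zariski topology is locally with maximum; (2) $\mathcal L_\mathrm{fin}$ is dense in $\mathcal L$ with respect to the constructible topology; (3) $\mathcal L_\mathrm{fin}$, with the subspace Zariski topology, is a spectral space if and only if $\mathcal L_\mathrm{fin}=\mathcal L$.
   Context: $S$ is a nonempty set. A family $\mathcal L\subseteq\mathfrak P(S)$ is an algebraic lattice of sets if it is closed under arbitrary intersections (so $S\in\mathcal L$) and under nonempty up-directed unions. For $F\subseteq S$ let $F^c$ be the intersection of all members of $\mathcal L$ containing $F$; an element $A\in\mathcal L$ is finitely generated if $A=F^c$ for some finite $F\subseteq S$. The Zariski topology on $\mathcal L$ has as basis of open sets the sets $\{A\in\mathcal L\mid G\subseteq A\}$, $G\subseteq S$ finite; with it $\mathcal L$ is a spectral space, and its specialization order is reverse inclusion. A spectral space is locally with maximum if every point has a local basis of open sets each having a maximum in the specialization order ($x\leq y$ iff $y\in\mathrm{Cl}(\{x\})$). The constructible topology is the coarsest topology in which all open quasi-compact sets are clopen. *)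

From Stdlib Require Import List.
Import ListNotations.

Set Implicit Arguments.

Definition set (X : Type) := X -> Prop.

Definition subset {X : Type} (A B : set X) : Prop := forall x, A x -> B x.
Definition setI {X : Type} (A B : set X) : set X := fun x => A x /\ B x.
Definition setD {X : Type} (A B : set X) : set X := fun x => A x /\ ~ B x.
Definition bigcup {X : Type} (F : set (set X)) : set X := fun x => exists U, F U /\ U x.
Definition bigcap {X : Type} (F : set (set X)) : set X := fun x => forall U, F U -> U x.
Definition finite_set {X : Type} (A : set X) : Prop :=
  exists s : list X, forall x, A x <-> In x s.

Section Generic.
Variable X : Type.

(* A topological space is given by a carrier P : set X and a family T of
   open subsets of P. *)
Definition is_topology (P : set X) (T : set (set X)) : Prop :=
  (forall U, T U -> subset U P) /\
  T P /\
  (forall F, subset F T -> T (bigcup F)) /\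
  (forall U V, T U -> T V -> T (setI U V)).

Definition is_closed (P : set X) (T : set (set X)) (C : set X) : Prop :=
  subset C P /\ T (setD P C).

Definition closure (P : set X) (T : set (set X)) (A : set X) : set X :=
  fun x => P x /\ forall U, T U -> U x -> exists y, A y /\ U y.

Definition spec_le (P : set X) (T : set (set X)) (x y : X) : Prop :=
  closure P T (fun z => z = x) y.

Definition quasi_compact (P : set X) (T : set (set X)) (K : set X) : Prop :=
  subset K P /\
  forall F, subset F T -> subset K (bigcup F) ->
    exists s : list (set X), (forall U, In U s -> F U) /\
      subset K (fun x => exists U, In U s /\ U x).

Definition T0 (P : set X) (T : set (set X)) : Prop :=
  forall x y, P x -> P y -> (forall U, T U -> (U x <-> U y)) -> x = y.

Definition irreducible (P : set X) (T : set (set X)) (C : set X) : Prop :=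
  (exists x, C x) /\
  forall C1 C2, is_closed P T C1 -> is_closed P T C2 ->
    subset C (fun x => C1 x \/ C2 x) -> subset C C1 \/ subset C C2.

Definition spectral (P : set X) (T : set (set X)) : Prop :=
  is_topology P T /\
  T0 P T /\
  quasi_compact P T P /\
  (forall U V, T U -> quasi_compact P T U -> T V -> quasi_compact P T V ->
     quasi_compact P T (setI U V)) /\
  (forall U, T U -> exists F, (forall V, F V -> T V /\ quasi_compact P T V) /\
     forall x, U x <-> bigcup F x) /\
  (forall C, is_closed P T C -> irreducible P T C ->
     exists x, C x /\ forall y, closure P T (fun z => z = x) y <-> C y).

Definition locally_with_maximum (P : set X) (T : set (set X)) : Prop :=
  forall x U, P x -> T U -> U x ->
    exists V, T V /\ V x /\ subset V U /\
      exists m, V m /\ forall y, V y -> spec_le P T y m.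

Definition subspace_top (T : set (set X)) (Q : set X) : set (set X) :=
  fun V => exists U, T U /\ forall x, V x <-> (U x /\ Q x).

Definition generated_top (P : set X) (B : set (set X)) : set (set X) :=
  fun U => forall T', is_topology P T' -> subset B T' -> T' U.

Definition constructible_top (P : set X) (T : set (set X)) : set (set X) :=
  generated_top P (fun U => (T U /\ quasi_compact P T U) \/
                            (exists V, T V /\ quasi_compact P T V /\
                                       forall x, U x <-> setD P V x)).

Definition dense_in (P : set X) (T : set (set X)) (A : set X) : Prop :=
  forall x, P x -> closure P T A x.

End Generic.

Section Lattice.
Variable S : Type.

Definition algebraic_lattice (L : set (set S)) : Prop :=
  (forall F, subset F L -> L (bigcap F)) /\
  (forall F, subset F L -> (exists A, F A) ->
     (forall A B, F A -> F B -> exists C, F C /\ subset A C /\ subset B C) ->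
     L (bigcup F)).

Definition gen_closure (L : set (set S)) (F : set S) : set S :=
  bigcap (fun A => L A /\ subset F A).

Definition finitely_generated (L : set (set S)) (A : set S) : Prop :=
  L A /\ exists F, finite_set F /\ A = gen_closure L F.

Definition L_fin (L : set (set S)) : set (set S) := finitely_generated L.

Definition zariski_basic (L : set (set S)) : set (set (set S)) :=
  fun B => exists G, finite_set G /\ forall A, B A <-> (L A /\ subset G A).

Definition zariski (L : set (set S)) : set (set (set S)) :=
  fun U => exists F, subset F (zariski_basic L) /\ forall A, U A <-> bigcup F A.

End Lattice.

From Stdlib Require Import List Classical FunctionalExtensionality PropExtensionality.
Import ListNotations.
Set Implicit Arguments.

(* The Zariski opens are exactly the families U of members of L in which every
   A contains a finite l such that the basic set {B in L | l <= B} lies in U.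
   So opens are upward closed, B <= A makes A a specialization of B, and the
   basic open of l has the maximum cl(l): this is (1).  The intervals
   {B in L | l <= B <= A} generate a topology in which both Zariski opens and
   their complements are open, hence one finer than the constructible topology,
   and each such interval around A contains the finitely generated cl(l): this
   is (2).  For (3), L itself is spectral, the generic point of an irreducible
   closed C being the directed union of the finitely generated members of C.
   Conversely, for A in L the finitely generated members below A form a closed
   subset of L_fin which is directed, hence irreducible, and a generic point
   of it can only be A. *)

Lemma set_ext (X : Type) (A B : set X) : (forall x, A x <-> B x) -> A = B.
Proof.
  intros H. apply functional_extensionality; intros x.
  apply propositional_extensionality, H.
Qed.

Lemma list_choice (A B : Type) (R : A -> B -> Prop) (l : list A) :
  (forall a, In a l -> exists b, R a b) ->
  exists l', (forall b, In b l' -> exists a, In a l /\ R a b) /\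
             (forall a, In a l -> exists b, In b l' /\ R a b).
Proof.
  induction l as [|a l IH]; intros H.
  - exists []. split; intros ? [].
  - destruct (H a (or_introl eq_refl)) as [b Hb].
    destruct IH as [l' [H1 H2]]; [intros a' Ha'; apply H; right; exact Ha'|].
    exists (b :: l'). split.
    + intros b' [<-|Hb']; [exists a; split; [left|]; auto|].
      destruct (H1 b' Hb') as [a' [Ha' Ra']]. exists a'. split; [right|]; auto.
    + intros a' [<-|Ha']; [exists b; split; [left|]; auto|].
      destruct (H2 a' Ha') as [b' [Hb' Rb']]. exists b'. split; [right|]; auto.
Qed.

Lemma spec_le_closed (X : Type) (P : set X) (T : set (set X)) C x y :
  is_closed P T C -> C x -> spec_le P T x y -> C y.
Proof.
  intros [_ HCo] Cx [Py Hy]. apply NNPP. intros nCy.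
  destruct (Hy _ HCo (conj Py nCy)) as [z [-> [_ nCx]]]. exact (nCx Cx).
Qed.

Lemma subspace_top_full (X : Type) (P : set X) (T : set (set X)) :
  (forall U, T U -> subset U P) -> subspace_top T P = T.
Proof.
  intros HTP. apply set_ext. intros V. split.
  - intros [U [HU HV]].
    replace V with U; [exact HU|].
    apply set_ext. intros x. rewrite HV. split; [|tauto].
    intros Ux. split; [exact Ux | exact (HTP U HU x Ux)].
  - intros HV. exists V. split; [exact HV|].
    intros x. split; [|tauto]. intros Vx. split; [exact Vx | exact (HTP V HV x Vx)].
Qed.

Section Lattice.
Variable S : Type.
Implicit Types (L : set (set S)) (l : list S).

Definition set_of_list l : set S := fun x => In x l.

Lemma subset_set_of_list_app l1 l2 A :
  subset (set_of_list (l1 ++ l2)) A <->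
  subset (set_of_list l1) A /\ subset (set_of_list l2) A.
Proof.
  unfold subset, set_of_list. split.
  - intros H. split; intros x Hx; apply H, in_or_app; auto.
  - intros [H1 H2] x Hx. apply in_app_or in Hx. destruct Hx; auto.
Qed.

Lemma subset_set_of_list_single (x : S) A : subset (set_of_list [x]) A <-> A x.
Proof.
  split; [intros H; apply H; left; reflexivity|]. intros Ax y [<-|[]]. exact Ax.
Qed.

Definition directed (F : set (set S)) : Prop :=
  forall A B, F A -> F B -> exists C, F C /\ subset A C /\ subset B C.

Lemma directed_set_of_list_sub (F : set (set S)) l :
  directed F -> (exists A, F A) -> subset (set_of_list l) (bigcup F) ->
  exists A, F A /\ subset (set_of_list l) A.
Proof.
  intros Hdir [A0 HA0]. induction l as [|a l IH]; intros Hl.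
  - exists A0. split; [exact HA0 | intros x []].
  - destruct (Hl a (or_introl eq_refl)) as [A1 [HA1 A1a]].
    destruct IH as [A2 [HA2 HlA2]]; [intros x Hx; apply Hl; right; exact Hx|].
    destruct (Hdir _ _ HA1 HA2) as [A3 [HA3 [H13 H23]]].
    exists A3. split; [exact HA3|].
    intros x [<-|Hx]; [apply H13, A1a | apply H23, HlA2, Hx].
Qed.

Definition upward_open (P : set (set S)) (T : set (set (set S))) : Prop :=
  forall U A B, T U -> U A -> P B -> subset A B -> U B.

Lemma subspace_upward P Q T :
  upward_open P T -> subset Q P -> upward_open Q (subspace_top T Q).
Proof.
  intros HT HQP V A B [U [HU HV]] VA QB AB. apply HV in VA as [UA _].
  apply HV. split; [exact (HT U A B HU UA (HQP B QB) AB) | exact QB].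
Qed.

Lemma closed_downward P T C A B :
  upward_open P T -> is_closed P T C -> C A -> P B -> subset B A -> C B.
Proof.
  intros HT [HCP HCo] CA HB BA. apply NNPP. intros nCB.
  destruct (HT _ B A HCo (conj HB nCB) (HCP A CA) BA) as [_ nCA]. exact (nCA CA).
Qed.

Lemma spec_le_of_subset P T A B :
  upward_open P T -> P A -> P B -> subset B A -> spec_le P T A B.
Proof.
  intros HT HA HB BA. split; [exact HB|]. intros U HU UB.
  exists A. split; [reflexivity | exact (HT U B A HU UB HA BA)].
Qed.

Lemma directed_irreducible P T C :
  upward_open P T -> subset C P -> (exists A, C A) -> directed C -> irreducible P T C.
Proof.
  intros HT HCP HCne Hdir. split; [exact HCne|].
  intros C1 C2 HC1 HC2 Hcov. apply NNPP. intros Hn. apply not_or_and in Hn as [Hn1 Hn2].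
  apply not_all_ex_not in Hn1 as [A1 HA1]. apply imply_to_and in HA1 as [CA1 nC1].
  apply not_all_ex_not in Hn2 as [A2 HA2]. apply imply_to_and in HA2 as [CA2 nC2].
  destruct (Hdir _ _ CA1 CA2) as [A3 [CA3 [H13 H23]]].
  destruct (Hcov A3 CA3) as [H|H].
  - exact (nC1 (closed_downward HT HC1 H (HCP A1 CA1) H13)).
  - exact (nC2 (closed_downward HT HC2 H (HCP A2 CA2) H23)).
Qed.

Definition cl L l : set S := gen_closure L (set_of_list l).

Lemma cl_sub L l : subset (set_of_list l) (cl L l).
Proof. intros x Hx A [_ HA]. exact (HA x Hx). Qed.

Lemma cl_min L l A : L A -> subset (set_of_list l) A -> subset (cl L l) A.
Proof. intros HA Hl x Hx. exact (Hx A (conj HA Hl)). Qed.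

Lemma cl_mono L l1 l2 : incl l1 l2 -> subset (cl L l1) (cl L l2).
Proof.
  intros H12 x Hx A [HA Hl2]. apply Hx. split; [exact HA|].
  intros y Hy. apply Hl2, H12, Hy.
Qed.

Lemma L_fin_cl L A : L_fin L A -> exists l, A = cl L l.
Proof.
  intros [_ [G [[l Hl] ->]]]. exists l. unfold cl.
  replace G with (set_of_list l); [reflexivity|]. apply set_ext. intros x. symmetry. apply Hl.
Qed.

(* With [R] trivial this is the Zariski topology; with [R := subset] the
   neighbourhoods are the intervals {B in L | l <= B <= A}, giving a topology
   finer than the constructible one. *)
Definition fin_nbhd_top L (R : set S -> set S -> Prop) : set (set (set S)) :=
  fun U => subset U L /\ forall A, U A -> exists l, subset (set_of_list l) A /\
    forall B, L B -> subset (set_of_list l) B -> R B A -> U B.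

Lemma fin_nbhd_top_topology L R : is_topology L (fin_nbhd_top L R).
Proof.
  split; [|split; [|split]].
  - intros U [HUL _]. exact HUL.
  - split; [intros A HA; exact HA|].
    intros A HA. exists []. split; [intros x []|]. intros B HB _ _. exact HB.
  - intros F HF. split.
    + intros A [U [HU UA]]. exact (proj1 (HF U HU) A UA).
    + intros A [U [HU UA]]. destruct (proj2 (HF U HU) A UA) as [l [HlA Hl]].
      exists l. split; [exact HlA|]. intros B HB HlB RB. exists U. auto.
  - intros U V [HUL HU] [_ HV]. split; [intros A [UA _]; exact (HUL A UA)|].
    intros A [UA VA].
    destruct (HU A UA) as [l1 [Hl1A Hl1]]. destruct (HV A VA) as [l2 [Hl2A Hl2]].
    exists (l1 ++ l2). split; [apply subset_set_of_list_app; auto|].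
    intros B HB HlB RB. apply subset_set_of_list_app in HlB as [Hl1B Hl2B].
    split; auto.
Qed.

Definition basic L l : set (set S) := fun A => L A /\ subset (set_of_list l) A.

Definition basic_union L (Gs : list (list S)) : set (set S) :=
  fun A => L A /\ exists l, In l Gs /\ subset (set_of_list l) A.

Lemma zariski_fin_nbhd L : zariski L = fin_nbhd_top L (fun _ _ => True).
Proof.
  apply set_ext. intros U. split.
  - intros [F [HF HU]]. split.
    + intros A UA. apply HU in UA as [B [HB BA]].
      destruct (HF B HB) as [G [_ HG]]. exact (proj1 (proj1 (HG A) BA)).
    + intros A UA. pose proof UA as UA'. apply HU in UA' as [B [HB BA]].
      destruct (HF B HB) as [G [[l Hl] HG]].
      assert (HGl : forall C, subset G C <-> subset (set_of_list l) C).
      { intros C. split; intros H x Hx; apply H, Hl, Hx. }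
      exists l. split; [apply HGl, (proj2 (proj1 (HG A) BA))|].
      intros C HC HlC _. apply HU. exists B. split; [exact HB|].
      apply HG. split; [exact HC | apply HGl, HlC].
  - intros [HUL HU]. exists (fun B => zariski_basic L B /\ subset B U). split.
    + intros B [HB _]. exact HB.
    + intros A. split.
      * intros UA. destruct (HU A UA) as [l [HlA Hl]].
        exists (basic L l). split; [split|].
        -- exists (set_of_list l). split; [exists l; intros x; reflexivity | intros C; reflexivity].
        -- intros B [HB HlB]. exact (Hl B HB HlB I).
        -- split; [exact (HUL A UA) | exact HlA].
      * intros [B [[_ HBU] BA]]. exact (HBU A BA).
Qed.

Lemma zariski_topology L : is_topology L (zariski L).
Proof. rewrite zariski_fin_nbhd. apply fin_nbhd_top_topology. Qed.

Lemma zariski_openP L U : zariski L U ->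
  subset U L /\ forall A, U A -> exists l, subset (set_of_list l) A /\ subset (basic L l) U.
Proof.
  rewrite zariski_fin_nbhd. intros [HUL HU]. split; [exact HUL|].
  intros A UA. destruct (HU A UA) as [l [HlA Hl]].
  exists l. split; [exact HlA|]. intros B [HB HlB]. exact (Hl B HB HlB I).
Qed.

Lemma basic_open L l : zariski L (basic L l).
Proof.
  rewrite zariski_fin_nbhd. split; [intros A [HA _]; exact HA|].
  intros A [_ HlA]. exists l. split; [exact HlA|]. intros B HB HlB _. split; assumption.
Qed.

Lemma zariski_upward L : upward_open L (zariski L).
Proof.
  intros U A B HU UA HB AB. destruct (proj2 (zariski_openP HU) A UA) as [l [HlA HlU]].
  apply HlU. split; [exact HB|]. intros x Hx. apply AB, HlA, Hx.
Qed.

Lemma not_subset_open L A : zariski L (fun B => L B /\ ~ subset B A).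
Proof.
  rewrite zariski_fin_nbhd. split; [intros B [HB _]; exact HB|].
  intros B [_ nBA]. apply not_all_ex_not in nBA as [s Hs].
  apply imply_to_and in Hs as [Bs nAs].
  exists [s]. split; [intros x [<-|[]]; exact Bs|].
  intros C HC HsC _. split; [exact HC|]. intros CA. apply nAs, CA, HsC. left. reflexivity.
Qed.

Lemma basic_compl_closed L l : is_closed L (zariski L) (setD L (basic L l)).
Proof.
  split; [intros A [HA _]; exact HA|].
  replace (setD L (setD L (basic L l))) with (basic L l); [apply basic_open|].
  apply set_ext. intros A. unfold setD. split.
  - intros [HA HlA]. split; [exact HA|]. intros [_ nbA]. apply nbA. split; assumption.
  - intros [HA H]. apply NNPP. intros nbA. apply H. split; assumption.
Qed.

Lemma basic_union_single L l : basic_union L [l] = basic L l.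
Proof.
  apply set_ext. intros A. split.
  - intros [HA [l' [[<-|[]] Hl]]]. split; assumption.
  - intros [HA Hl]. split; [exact HA|]. exists l. split; [left; reflexivity | exact Hl].
Qed.

Lemma basic_union_nil L : basic_union L [[]] = L.
Proof.
  apply set_ext. intros A. split; [intros [HA _]; exact HA|].
  intros HA. split; [exact HA|]. exists []. split; [left; reflexivity | intros x []].
Qed.

Lemma basic_union_setI L Gs Hs :
  setI (basic_union L Gs) (basic_union L Hs) =
  basic_union L (map (fun p => fst p ++ snd p) (list_prod Gs Hs)).
Proof.
  apply set_ext. intros A. split.
  - intros [[HA [g [Hg HgA]]] [_ [h [Hh HhA]]]]. split; [exact HA|].
    exists (g ++ h). split.
    + apply in_map_iff. exists (g, h). split; [reflexivity | apply in_prod; assumption].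
    + apply subset_set_of_list_app. split; assumption.
  - intros [HA [l [Hl HlA]]]. apply in_map_iff in Hl as [[g h] [<- Hgh]].
    apply in_prod_iff in Hgh as [Hg Hh]. apply subset_set_of_list_app in HlA as [HgA HhA].
    split; split; try exact HA; [exists g | exists h]; split; assumption.
Qed.

Lemma zariski_T0 L : T0 L (zariski L).
Proof.
  intros A B HA HB H. apply set_ext. intros x.
  destruct (H (basic L [x]) (basic_open L [x])) as [HAB HBA].
  rewrite <- !(subset_set_of_list_single x). split.
  - intros Ax. exact (proj2 (HAB (conj HA Ax))).
  - intros Bx. exact (proj2 (HBA (conj HB Bx))).
Qed.

Lemma constructible_fin_nbhd L :
  subset (constructible_top L (zariski L)) (fin_nbhd_top L (fun B A => subset B A)).
Proof.
  intros U HU. apply HU; [apply fin_nbhd_top_topology|].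
  intros V [[HV _] | [W [HW [_ HVW]]]].
  - destruct (zariski_openP HV) as [HVL HVb]. split; [exact HVL|].
    intros A VA. destruct (HVb A VA) as [l [HlA HlV]].
    exists l. split; [exact HlA|]. intros B HB HlB _. apply HlV. split; assumption.
  - rewrite (set_ext _ _ HVW). split; [intros A [HA _]; exact HA|].
    intros A [HA nWA]. exists []. split; [intros x []|].
    intros B HB _ BA. split; [exact HB|].
    intros WB. exact (nWA (zariski_upward HW WB HA BA)).
Qed.

Definition fin_below L A : set (set S) := fun B => L_fin L B /\ subset B A.

Lemma fin_below_closed L A :
  is_closed (L_fin L) (subspace_top (zariski L) (L_fin L)) (fin_below L A).
Proof.
  split; [intros B [HB _]; exact HB|].
  exists (fun B => L B /\ ~ subset B A). split; [apply not_subset_open|].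
  intros B. unfold setD, fin_below. split.
  - intros [HB nCB]. split; [|exact HB].
    split; [exact (proj1 HB) | intros BA; exact (nCB (conj HB BA))].
  - intros [[_ nBA] HB]. split; [exact HB|]. intros [_ BA]. exact (nBA BA).
Qed.

End Lattice.

Section AlgebraicLattice.
Variables (S : Type) (L : set (set S)).
Hypothesis HL : algebraic_lattice L.

Lemma cl_L l : L (cl L l).
Proof. apply (proj1 HL). intros A [HA _]. exact HA. Qed.

Lemma cl_fin l : L_fin L (cl L l).
Proof.
  split; [apply cl_L|]. exists (set_of_list l).
  split; [exists l; intros x; reflexivity | reflexivity].
Qed.

Lemma cl_basic l : basic L l (cl L l).
Proof. split; [apply cl_L | apply cl_sub]. Qed.

Lemma basic_union_quasi_compact Gs : quasi_compact L (zariski L) (basic_union L Gs).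
Proof.
  split; [intros A [HA _]; exact HA|].
  intros F HF Hcov.
  assert (Hpick : forall l, In l Gs -> exists V, F V /\ V (cl L l)).
  { intros l Hl. apply Hcov. split; [apply cl_L|]. exists l. split; [exact Hl | apply cl_sub]. }
  destruct (list_choice (fun l V => F V /\ V (cl L l)) Gs Hpick) as [s [Hs1 Hs2]].
  exists s. split.
  - intros V HV. destruct (Hs1 V HV) as [l [_ [FV _]]]. exact FV.
  - intros A [HA [l [Hl HlA]]]. destruct (Hs2 l Hl) as [V [HV [FV Vcl]]].
    exists V. split; [exact HV|].
    exact (zariski_upward (HF V FV) Vcl HA (cl_min HA HlA)).
Qed.

Lemma quasi_compact_open_basic_union U :
  zariski L U -> quasi_compact L (zariski L) U -> exists Gs, U = basic_union L Gs.
Proof.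
  intros HU [_ HUc]. destruct (zariski_openP HU) as [HUL HUb].
  destruct (HUc (fun B => exists l, B = basic L l /\ subset B U)) as [s [Hs Hcov]].
  - intros B [l [-> _]]. apply basic_open.
  - intros A UA. destruct (HUb A UA) as [l [HlA HlU]].
    exists (basic L l). split; [exists l; split; [reflexivity | exact HlU]|].
    split; [exact (HUL A UA) | exact HlA].
  - destruct (list_choice (fun B l => B = basic L l /\ subset B U) s Hs) as [Gs [HG1 HG2]].
    exists Gs. apply set_ext. intros A. split.
    + intros UA. destruct (Hcov A UA) as [B [HB BA]].
      destruct (HG2 B HB) as [l [Hl [-> _]]]. destruct BA as [HA HlA].
      split; [exact HA|]. exists l. split; assumption.
    + intros [HA [l [Hl HlA]]]. destruct (HG1 l Hl) as [B [_ [-> HBU]]].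
      apply HBU. split; assumption.
Qed.

Lemma closed_irreducible_cl_app C l1 l2 :
  is_closed L (zariski L) C -> irreducible L (zariski L) C ->
  C (cl L l1) -> C (cl L l2) -> C (cl L (l1 ++ l2)).
Proof.
  intros HC [_ Hirr] C1 C2.
  assert (Hup : exists A, C A /\ subset (set_of_list (l1 ++ l2)) A).
  { apply NNPP. intros Hn.
    assert (Hcov : subset C (fun A => setD L (basic L l1) A \/ setD L (basic L l2) A)).
    { intros A CA. pose proof (proj1 HC A CA) as HA.
      destruct (classic (subset (set_of_list l1) A)) as [H1|H1].
      - right. split; [exact HA|]. intros [_ H2]. apply Hn.
        exists A. split; [exact CA | apply subset_set_of_list_app; split; assumption].
      - left. split; [exact HA|]. intros [_ H]. exact (H1 H). }
    destruct (Hirr _ _ (basic_compl_closed L l1) (basic_compl_closed L l2) Hcov) as [H|H].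
    - exact (proj2 (H _ C1) (cl_basic l1)).
    - exact (proj2 (H _ C2) (cl_basic l2)). }
  destruct Hup as [A [CA HlA]].
  exact (closed_downward (@zariski_upward _ L) HC CA (cl_L _) (cl_min (proj1 HC A CA) HlA)).
Qed.

Lemma zariski_sober C :
  is_closed L (zariski L) C -> irreducible L (zariski L) C ->
  exists g, C g /\ forall A, spec_le L (zariski L) g A <-> C A.
Proof.
  intros HC HCirr.
  pose (D := fun d => C d /\ exists l, d = cl L l).
  assert (HDL : subset D L) by (intros d [Cd _]; exact (proj1 HC d Cd)).
  assert (HCD : forall A l, C A -> subset (set_of_list l) A -> D (cl L l)).
  { intros A l CA HlA. split; [|exists l; reflexivity].
    exact (closed_downward (@zariski_upward _ L) HC CA (cl_L l) (cl_min (proj1 HC A CA) HlA)). }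
  assert (HDne : exists d, D d).
  { destruct (proj1 HCirr) as [A CA]. exists (cl L []). apply (HCD A); [exact CA | intros x []]. }
  assert (HDdir : directed D).
  { intros d1 d2 [C1 [l1 ->]] [C2 [l2 ->]]. exists (cl L (l1 ++ l2)). split; [|split].
    - split; [apply closed_irreducible_cl_app; assumption | exists (l1 ++ l2); reflexivity].
    - apply cl_mono, incl_appl, incl_refl.
    - apply cl_mono, incl_appr, incl_refl. }
  pose (g := bigcup D).
  assert (Lg : L g) by exact (proj2 HL D HDL HDne HDdir).
  assert (Cg : C g).
  { apply NNPP. intros nCg.
    destruct (proj2 (zariski_openP (proj2 HC)) g (conj Lg nCg)) as [l [Hlg HlU]].
    destruct (directed_set_of_list_sub HDdir HDne Hlg) as [d [Dd Hld]].
    exact (proj2 (HlU d (conj (HDL d Dd) Hld)) (proj1 Dd)). }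
  exists g. split; [exact Cg|]. intros A. split.
  - intros HgA. exact (spec_le_closed HC Cg HgA).
  - intros CA. split; [exact (proj1 HC A CA)|]. intros U HU UA.
    destruct (proj2 (zariski_openP HU) A UA) as [l [HlA HlU]].
    exists g. split; [reflexivity|].
    apply (zariski_upward HU (HlU _ (cl_basic l)) Lg).
    intros x Hx. exists (cl L l). split; [exact (HCD A l CA HlA) | exact Hx].
Qed.

Lemma zariski_basis U : zariski L U ->
  exists F, (forall V, F V -> zariski L V /\ quasi_compact L (zariski L) V) /\
            forall A, U A <-> bigcup F A.
Proof.
  intros HU. destruct (zariski_openP HU) as [HUL HUb].
  exists (fun V => exists l, V = basic L l /\ subset V U). split.
  - intros V [l [-> _]]. split; [apply basic_open|].
    rewrite <- basic_union_single. apply basic_union_quasi_compact.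
  - intros A. split.
    + intros UA. destruct (HUb A UA) as [l [HlA HlU]].
      exists (basic L l). split; [exists l; split; [reflexivity | exact HlU]|].
      split; [exact (HUL A UA) | exact HlA].
    + intros [V [[l [-> HVU]] VA]]. exact (HVU A VA).
Qed.

Lemma spectral_zariski : spectral L (zariski L).
Proof.
  split; [apply zariski_topology|]. split; [apply zariski_T0|]. split.
  { pose proof (basic_union_quasi_compact [[]]) as H. rewrite basic_union_nil in H. exact H. }
  split; [|split; [exact zariski_basis | exact zariski_sober]].
  intros U V HU HUc HV HVc.
  destruct (quasi_compact_open_basic_union HU HUc) as [Gs ->].
  destruct (quasi_compact_open_basic_union HV HVc) as [Hs ->].
  rewrite basic_union_setI. apply basic_union_quasi_compact.
Qed.

Lemma zariski_locally_with_maximum : locally_with_maximum L (zariski L).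
Proof.
  intros A U HA HU UA. destruct (proj2 (zariski_openP HU) A UA) as [l [HlA HlU]].
  exists (basic L l). split; [apply basic_open|]. split; [split; assumption|].
  split; [exact HlU|]. exists (cl L l). split; [apply cl_basic|].
  intros B [HB HlB].
  apply spec_le_of_subset; [apply zariski_upward | exact HB | apply cl_L | exact (cl_min HB HlB)].
Qed.

Lemma L_fin_dense : dense_in L (constructible_top L (zariski L)) (L_fin L).
Proof.
  intros A HA. split; [exact HA|]. intros U HU UA.
  destruct (proj2 (constructible_fin_nbhd HU) A UA) as [l [HlA Hl]].
  exists (cl L l). split; [apply cl_fin|].
  apply Hl; [apply cl_L | apply cl_sub | exact (cl_min HA HlA)].
Qed.

Lemma fin_below_irreducible A : L A ->
  irreducible (L_fin L) (subspace_top (zariski L) (L_fin L)) (fin_below L A).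
Proof.
  intros HA. apply directed_irreducible.
  - apply subspace_upward with (P := L); [apply zariski_upward | intros B [HB _]; exact HB].
  - intros B [HB _]. exact HB.
  - exists (cl L []). split; [apply cl_fin | apply cl_min; [exact HA | intros x []]].
  - intros B1 B2 [HB1 B1A] [HB2 B2A].
    destruct (L_fin_cl HB1) as [l1 ->]. destruct (L_fin_cl HB2) as [l2 ->].
    exists (cl L (l1 ++ l2)). split; [split; [apply cl_fin | apply cl_min; [exact HA|]]|].
    + apply subset_set_of_list_app. split; intros x Hx; [apply B1A | apply B2A]; apply cl_sub, Hx.
    + split; apply cl_mono; [apply incl_appl | apply incl_appr]; apply incl_refl.
Qed.

Lemma fin_below_generic_point A g : L A -> fin_below L A g ->
  (forall B, spec_le (L_fin L) (subspace_top (zariski L) (L_fin L)) g B <-> fin_below L A B) ->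
  A = g.
Proof.
  intros HA [_ gA] Hg. apply set_ext. intros s. split; [|apply gA].
  intros As.
  assert (Hs : fin_below L A (cl L [s])).
  { split; [apply cl_fin | apply cl_min; [exact HA | apply subset_set_of_list_single, As]]. }
  apply Hg in Hs as [_ Hcl].
  destruct (Hcl (fun B => basic L [s] B /\ L_fin L B)) as [z [-> [[_ Hz] _]]].
  - exists (basic L [s]). split; [apply basic_open | intros B; reflexivity].
  - split; [apply cl_basic | apply cl_fin].
  - apply subset_set_of_list_single, Hz.
Qed.

Lemma spectral_L_fin_full :
  spectral (L_fin L) (subspace_top (zariski L) (L_fin L)) -> forall A, L A -> L_fin L A.
Proof.
  intros [_ [_ [_ [_ [_ Hsober]]]]] A HA.
  destruct (Hsober _ (fin_below_closed L A) (fin_below_irreducible HA)) as [g [Cg Hg]].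
  rewrite (fin_below_generic_point HA Cg Hg). exact (proj1 Cg).
Qed.

End AlgebraicLattice.

Theorem proposition4p3 (S : Type) (HS : inhabited S) (L : set (set S))
  (HL : algebraic_lattice L) :
  locally_with_maximum L (zariski L) /\
  dense_in L (constructible_top L (zariski L)) (L_fin L) /\
  (spectral (L_fin L) (subspace_top (zariski L) (L_fin L)) <->
   (forall A, L_fin L A <-> L A)).
Proof.
  split; [exact (zariski_locally_with_maximum HL)|].
  split; [exact (L_fin_dense HL)|].
  split.
  - intros Hsp A. split; [intros [HA _]; exact HA | exact (spectral_L_fin_full HL Hsp A)].
  - intros Hfin. replace (L_fin L) with L by (symmetry; exact (set_ext _ _ Hfin)).
    rewrite subspace_top_full by exact (proj1 (zariski_topology L)).
    exact (spectral_zariski HL).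
Qed.
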